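(* For the hypergeometric weights described in the context, for all $n$: $H_n=\dfrac{\tau_{n+1}}{\tau_n}$ and $p^1_n=-\vartheta\log\tau_n$.
   Context: Weights on $\mathbb N_0$: $w^{(a)}(k)=\frac{(b^{(a)}_1)_k\cdots(b^{(a)}_{M^{(a)}})_k}{(c_1)_k\cdots(c_N)_k}\frac{(\eta^{(a)})^k}{k!}$, $a\in\{1,2\}$, with convergent series. Moment matrix $\mathscr M$ (indices from 0): $\mathscr M_{n,2m}=\sum_k k^{n+m}w^{(1)}(k)$, $\mathscr M_{n,2m+1}=\sum_k k^{n+m}w^{(2)}(k)$. $\tau_n$ is the $n$-th leading principal minor ($\tau_0=1$), assumed nonzero for all $n$, so $\mathscr M=S^{-1}H\tilde S^{-\top}$ with $S,\tilde S$ lower unitriangular and $H=\operatorname{diag}(H_0,H_1,\dots)$. $B_n(x)=x^n+p^1_nx^{n-1}+\cdots$ is the $n$-th entry of $SX(x)$, $X(x)=(1,x,x^2,\dots)^\top$ (the monic type II multiple orthogonal polynomial on the step line). $\vartheta=\eta^{(1)}\partial/\partial\eta^{(1)}+\eta^{(2)}\partial/\partial\eta^{(2)}$. *)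

From Stdlib Require Import Reals List.
From Coquelicot Require Import Coquelicot.
From mathcomp Require Import all_boot all_algebra.
From mathcomp Require Import Rstruct.

Set Implicit Arguments.
Unset Strict Implicit.
Unset Printing Implicit Defensive.

Local Open Scope R_scope.

Fixpoint poch (x : R) (k : nat) : R :=
  match k with
  | O => 1
  | S k' => poch x k' * (x + INR k')
  end.

Definition prodR (l : list R) : R := fold_right Rmult 1 l.

Definition hweight (bs cs : list R) (eta : R) (k : nat) : R :=
  prodR (map (fun b => poch b k) bs) / prodR (map (fun c => poch c k) cs)
  * eta ^ k / INR (Factorial.fact k).

Definition moment (bs1 bs2 cs : list R) (eta1 eta2 : R) (n j : nat) : R :=
  if Nat.even j
  then Series (fun k => INR k ^ (n + Nat.div2 j) * hweight bs1 cs eta1 k)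
  else Series (fun k => INR k ^ (n + Nat.div2 j) * hweight bs2 cs eta2 k).

Definition tau (bs1 bs2 cs : list R) (eta1 eta2 : R) (n : nat) : R :=
  (\det (\matrix_(i < n, j < n) moment bs1 bs2 cs eta1 eta2 i j))%R.

Definition lower_unitri (S : nat -> nat -> R) : Prop :=
  (forall i, S i i = 1) /\ (forall i j, (i < j)%nat -> S i j = 0).

(* Gauss-Borel factorization  M = S^{-1} H St^{-T}, written equivalently
   (S, St lower unitriangular, all sums finite) as  S M St^T = diag(H). *)
Definition gauss_borel (Mo : nat -> nat -> R) (S St : nat -> nat -> R)
  (H : nat -> R) : Prop :=
  lower_unitri S /\ lower_unitri St /\
  forall i j,
    sum_f_R0 (fun k => sum_f_R0 (fun l => S i k * Mo k l * St j l) j) i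
    = if Nat.eqb i j then H i else 0.

(* B_n(x) = n-th entry of S X(x) = sum_{j<=n} S_{n,j} x^j. *)
Definition Bpoly (S : nat -> nat -> R) (n : nat) (x : R) : R :=
  sum_f_R0 (fun j => S n j * x ^ j) n.

(* p^1_n = coefficient of x^(n-1) in B_n (taken to be 0 for n = 0). *)
Definition p1 (Sm : nat -> nat -> R) (n : nat) : R :=
  match n with O => 0 | S n' => Sm n n' end.

From Stdlib Require Import Reals List Lra Lia Classical.
From Coquelicot Require Import Coquelicot.
From mathcomp Require Import all_boot all_algebra perm zify.
From mathcomp Require Import Rstruct.

(* The Gauss-Borel factors are unitriangular, so they leave the leading
   principal minors unchanged: tau_n = H_0 ... H_(n-1).  For the second
   identity, every moment is a power series in its eta, and theta acts on the
   moment matrix by shifting the row index: theta M_(i,j) = M_(i+1,j).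
   Differentiating the determinant row by row, theta tau_n is the sum of the
   minors with row i replaced by row i+1; all but the last have two equal rows,
   and the last equals -p^1_n tau_n because the row (S_(n,k))_k is orthogonal to
   the first n columns of M.  Differentiating the moments termwise needs eta
   strictly inside the radius of convergence of the hypergeometric series; the
   ratio test (Raabe's test on the boundary) shows that otherwise the terms
   k^q w(k) would not even tend to 0 for some q. *)

Set Implicit Arguments.
Unset Strict Implicit.
Unset Printing Implicit Defensive.

Import GRing.Theory.
Local Open Scope R_scope.

(** * Hypergeometric coefficients *)

Definition nonpos_int_free (cs : list R) : Prop :=
  forall c, In c cs -> forall m : nat, c <> - INR m.

Definition hcoef (bs cs : list R) (k : nat) : R :=
  prodR (map (fun b => poch b k) bs) / prodR (map (fun c => poch c k) cs)
  / INR (Factorial.fact k).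

Lemma hweightE bs cs x k : hweight bs cs x k = hcoef bs cs k * x ^ k.
Proof. rewrite /hweight /hcoef /Rdiv; ring. Qed.

Lemma prodR_cons a l : prodR (a :: l) = a * prodR l.
Proof. by []. Qed.

Lemma prodR_map_neq0 (A : Type) (f : A -> R) l :
  (forall a, In a l -> f a <> 0) -> prodR (map f l) <> 0.
Proof.
elim: l => [|a l IH] Hf /=; first lra.
apply: Rmult_integral_contrapositive_currified; first by apply: Hf; left.
by apply: IH => b hb; apply: Hf; right.
Qed.

Definition shifted_prod (l : list R) (k : nat) : R := prodR (map (fun b => b + INR k) l).

Lemma prod_pochS l k :
  prodR (map (fun b => poch b k.+1) l) = prodR (map (fun b => poch b k) l) * shifted_prod l k.
Proof.
rewrite /shifted_prod; elim: l => [|a l IH]; first by rewrite /= Rmult_1_l.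
by cbn [map]; rewrite !prodR_cons IH /=; ring.
Qed.

Lemma poch_neq0 c k : (forall m : nat, c <> - INR m) -> poch c k <> 0.
Proof.
move=> Hc; elim: k => [|k IH] /=; first lra.
apply: Rmult_integral_contrapositive_currified => // h.
by apply: (Hc k); lra.
Qed.

Lemma shifted_prod_neq0 cs k : nonpos_int_free cs -> shifted_prod cs k <> 0.
Proof. move=> Hc; apply: prodR_map_neq0 => c /Hc Hcm h; apply: (Hcm k); lra. Qed.

Definition hratio (bs cs : list R) (k : nat) : R :=
  shifted_prod bs k / shifted_prod cs k / INR k.+1.

Lemma hcoefS bs cs k : nonpos_int_free cs ->
  hcoef bs cs k.+1 = hcoef bs cs k * hratio bs cs k.
Proof.
move=> Hc; rewrite /hcoef /hratio !prod_pochS fact_simpl mult_INR.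
have Hpoch : prodR (map (fun c => poch c k) cs) <> 0
  by apply: prodR_map_neq0 => c /Hc; apply: poch_neq0.
have Hshift := @shifted_prod_neq0 cs k Hc; have Hfact := INR_fact_neq_0 k.
have HS : INR k.+1 <> 0 by apply: not_0_INR.
by field; repeat split.
Qed.

Lemma hcoef_eq0_le bs cs k0 k : nonpos_int_free cs -> hcoef bs cs k0 = 0 ->
  (k0 <= k)%N -> hcoef bs cs k = 0.
Proof.
move=> Hc H0; elim: k => [|k IH]; first by rewrite leqn0 => /eqP <-.
rewrite leq_eqVlt => /orP [/eqP <- //|]; rewrite ltnS => /IH.
by rewrite hcoefS // => ->; ring.
Qed.

(** * Radius of convergence *)

Lemma CV_radius_gt_bounded (a : nat -> R) x r M :
  Rabs x < r -> (forall n, Rabs (a n * r ^ n) <= M) -> Rbar_lt (Rabs x) (CV_radius a).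
Proof.
move=> Hxr HM; have [Hub _] := CV_radius_bounded a.
have := Hub r (ex_intro _ M HM).
by case: (CV_radius a) => [l| |] //= Hr; lra.
Qed.

Lemma sum_f_R0_ge_term (f : nat -> R) n m :
  (forall k, 0 <= f k) -> (n <= m)%N -> f n <= sum_f_R0 f m.
Proof.
move=> Hf; elim: m => [|m IH]; first by rewrite leqn0 => /eqP -> /=; lra.
rewrite leq_eqVlt => /orP [/eqP -> | ]; rewrite /=.
- by have := cond_pos_sum f m Hf; lra.
- by rewrite ltnS => /IH; have := Hf m.+1; lra.
Qed.

Lemma CV_radius_eventually0 (a : nat -> R) k0 x :
  (forall k, (k0 <= k)%N -> a k = 0) -> Rbar_lt (Rabs x) (CV_radius a).
Proof.
move=> H0; set r := Rabs x + 1; set f := fun n => Rabs (a n * r ^ n).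
have Hf : forall n, 0 <= f n by move=> n; apply: Rabs_pos.
apply: (@CV_radius_gt_bounded a x r (sum_f_R0 f k0)); first by rewrite /r; lra.
move=> n; case: (leqP k0 n) => [/H0 | /ltnW].
- by rewrite /f => ->; rewrite Rmult_0_l Rabs_R0; apply: cond_pos_sum.
- exact: sum_f_R0_ge_term.
Qed.

Lemma not_lim0_abs_nondecreasing (u : nat -> R) K : u K <> 0 ->
  (forall n, (K <= n)%N -> Rabs (u n) <= Rabs (u n.+1)) -> ~ is_lim_seq u 0.
Proof.
move=> HK Hmon /is_lim_seq_spec Hlim.
have Hge : forall n, (K <= n)%N -> Rabs (u K) <= Rabs (u n).
  elim=> [|n IH]; first by rewrite leqn0 => /eqP ->; lra.
  rewrite leq_eqVlt => /orP [/eqP -> | ]; first lra.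
  by rewrite ltnS => hn; apply: Rle_trans (IH hn) (Hmon n hn).
have [N HN] := Hlim (mkposreal _ (Rabs_pos_lt _ HK)).
have := HN (maxn N K) (elimT leP (leq_maxl _ _)); have := Hge (maxn N K) (leq_maxr _ _).
rewrite /= Rminus_0_r; lra.
Qed.

Definition scaled_prod (l : list R) (n : nat) : R :=
  prodR (map (fun b => Rabs (1 + b / INR n)) l).

Lemma shifted_prod_abs l n : INR n <> 0 ->
  Rabs (shifted_prod l n) = INR n ^ length l * scaled_prod l n.
Proof.
move=> Hn; rewrite /shifted_prod /scaled_prod; elim: l => [|a l IH] /=.
  by rewrite Rabs_R1; ring.
have -> : a + INR n = INR n * (1 + a / INR n) by field.
by rewrite !Rabs_mult IH (Rabs_pos_eq (INR n) (pos_INR n)); ring.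
Qed.

Lemma is_lim_seq_inv_INR : is_lim_seq (fun n => / INR n) 0.
Proof. exact: (is_lim_seq_inv _ _ is_lim_seq_INR). Qed.

Lemma scaled_prod_lim l : is_lim_seq (scaled_prod l) 1.
Proof.
rewrite /scaled_prod; elim: l => [|a l IH] /=; first exact: is_lim_seq_const.
have Ha : is_lim_seq (fun n => Rabs (1 + a / INR n)) 1.
  have := is_lim_seq_abs _ _ (is_lim_seq_plus' _ _ _ _ (is_lim_seq_const 1)
            (is_lim_seq_mult' _ _ _ _ (is_lim_seq_const a) is_lim_seq_inv_INR)).
  by rewrite Rmult_0_r Rplus_0_r /= Rabs_R1.
by have := is_lim_seq_mult' _ _ _ _ Ha IH; rewrite Rmult_1_r.
Qed.

Lemma scaled_prod_neq0 cs n : nonpos_int_free cs -> INR n <> 0 -> scaled_prod cs n <> 0.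
Proof.
move=> Hc Hn h; apply: (@shifted_prod_neq0 cs n Hc); apply: Rabs_eq_0.
by rewrite shifted_prod_abs // h Rmult_0_r.
Qed.

Definition power_ratio (M N n : nat) : R := INR n ^ M / (INR n ^ N * INR n.+1).

Lemma hratio_abs bs cs n : nonpos_int_free cs -> (0 < n)%N ->
  Rabs (hratio bs cs n)
  = power_ratio (length bs) (length cs) n * (scaled_prod bs n / scaled_prod cs n).
Proof.
move=> Hc Hn; have Hn0 : INR n <> 0 by apply: not_0_INR; lia.
have HS : 0 < INR n.+1 by apply: lt_0_INR; lia.
have HS0 : INR n.+1 <> 0 by lra.
have HQ := @shifted_prod_neq0 cs n Hc.
have Hsc := scaled_prod_neq0 Hc Hn0; have Hpow := pow_nonzero _ (length cs) Hn0.
rewrite /hratio /power_ratio !Rabs_div // (Rabs_pos_eq _ (Rlt_le _ _ HS)) !shifted_prod_abs //.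
by field; repeat split.
Qed.

Lemma is_lim_seq_inv_INRS : is_lim_seq (fun n => / INR n.+1) 0.
Proof. exact: (proj1 (is_lim_seq_incr_1 _ _) is_lim_seq_inv_INR). Qed.

Lemma power_ratio_lim0 M N : (M <= N)%N -> is_lim_seq (power_ratio M N) 0.
Proof.
move=> HMN; apply: (is_lim_seq_le_le_loc (fun _ => 0) _ (fun n => / INR n.+1));
  [|exact: is_lim_seq_const|exact: is_lim_seq_inv_INRS].
exists 1%N => n Hn; have H1 : 1 <= INR n by apply: (le_INR 1).
have HS : 0 < INR n.+1 by apply: lt_0_INR; lia.
have HN : 0 < INR n ^ N by apply: pow_lt; lra.
have HM : 0 < INR n ^ M by apply: pow_lt; lra.
have HMN' : INR n ^ M <= INR n ^ N by apply: Rle_pow => //; apply/leP.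
rewrite /power_ratio; split.
- by apply: Rlt_le; apply: Rdiv_lt_0_compat; nra.
- apply: (Rle_trans _ (INR n ^ N / (INR n ^ N * INR n.+1))).
    by apply: Rmult_le_compat_r => //; apply: Rlt_le; apply: Rinv_0_lt_compat; nra.
  by right; field; lra.
Qed.

Lemma power_ratio_lim1 N : is_lim_seq (power_ratio N.+1 N) 1.
Proof.
apply: (is_lim_seq_ext_loc (fun n => 1 - / INR n.+1)).
  exists 1%N => n Hn; have H1 : 1 <= INR n by apply: (le_INR 1).
  have HN : 0 < INR n ^ N by apply: pow_lt; lra.
  by rewrite /power_ratio S_INR -tech_pow_Rmult; field; split; lra.
rewrite -[X in Rbar.Finite X](Rminus_0_r 1).
exact: (is_lim_seq_minus' _ _ _ _ (is_lim_seq_const 1) is_lim_seq_inv_INRS).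
Qed.

Lemma power_ratio_lim_infty M N : (N.+2 <= M)%N -> is_lim_seq (power_ratio M N) p_infty.
Proof.
move=> HMN; apply: (is_lim_seq_le_p_loc (fun n => INR n.-1)); last first.
  exact: (proj2 (is_lim_seq_incr_1 _ _) is_lim_seq_INR).
exists 1%N => n Hn; have H1 : 1 <= INR n by apply: (le_INR 1).
have HN : 0 < INR n ^ N by apply: pow_lt; lra.
have HS : 0 < INR n.+1 by apply: lt_0_INR; lia.
have HM : INR n ^ N.+2 <= INR n ^ M by apply: Rle_pow => //; apply/leP.
apply: (Rle_trans _ (INR n ^ N.+2 / (INR n ^ N * INR n.+1))); last first.
  by apply: Rmult_le_compat_r HM; apply: Rlt_le; apply: Rinv_0_lt_compat; nra.
have -> : INR n ^ N.+2 / (INR n ^ N * INR n.+1) = INR n * INR n / (INR n + 1).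
  by rewrite S_INR -!tech_pow_Rmult; field; split; lra.
have -> : INR n.-1 = INR n - 1.
  by case: n Hn H1 {HS HN HM} => [|m] Hn H1; [lia | rewrite S_INR /=; lra].
apply: (Rmult_le_reg_r (INR n + 1)); first lra.
by rewrite /Rdiv Rmult_assoc Rinv_l; nra.
Qed.

Lemma is_Rbar_mult_1_r (l : Rbar) : is_Rbar_mult l 1 l.
Proof.
case: l => [r| |].
- by rewrite /is_Rbar_mult /= Rmult_1_r.
- by apply: is_Rbar_mult_p_infty_pos => /=; lra.
- by apply: is_Rbar_mult_m_infty_pos => /=; lra.
Qed.

Lemma hratio_abs_lim bs cs l : nonpos_int_free cs ->
  is_lim_seq (power_ratio (length bs) (length cs)) l ->
  is_lim_seq (fun n => Rabs (hratio bs cs n)) l.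
Proof.
move=> Hc Hl.
apply: (is_lim_seq_ext_loc
  (fun n => power_ratio (length bs) (length cs) n * (scaled_prod bs n / scaled_prod cs n))).
  by exists 1%N => n Hn; rewrite hratio_abs //; apply/leP.
apply: (is_lim_seq_mult _ _ _ _ _ Hl _ (is_Rbar_mult_1_r l)).
have := is_lim_seq_div' _ _ _ _ (scaled_prod_lim bs) (scaled_prod_lim cs) R1_neq_R0.
by rewrite /Rdiv Rinv_1 Rmult_1_r.
Qed.

Lemma hcoef_ratio bs cs k : nonpos_int_free cs -> hcoef bs cs k <> 0 ->
  hcoef bs cs k.+1 / hcoef bs cs k = hratio bs cs k.
Proof. by move=> Hc Hk; rewrite hcoefS //; field. Qed.

Lemma hweight_moment_not_lim0 bs cs x q K :
  nonpos_int_free cs -> (forall k, hcoef bs cs k <> 0) -> x <> 0 -> (0 < K)%N ->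
  (forall n, (K <= n)%N -> INR n ^ q <= INR n.+1 ^ q * Rabs (hratio bs cs n * x)) ->
  ~ is_lim_seq (fun k => INR k ^ q * hweight bs cs x k) 0.
Proof.
move=> Hc Hnz Hx HK Hq; apply: (@not_lim0_abs_nondecreasing _ K).
  rewrite hweightE; apply: Rmult_integral_contrapositive_currified.
    by apply: pow_nonzero; apply: not_0_INR; lia.
  by apply: Rmult_integral_contrapositive_currified => //; apply: pow_nonzero.
move=> n Hn; rewrite !hweightE hcoefS // -tech_pow_Rmult.
set a := hcoef bs cs n; set r := hratio bs cs n.
have -> : INR n.+1 ^ q * (a * r * (x * x ^ n)) = INR n.+1 ^ q * (r * x) * (a * x ^ n) by ring.
rewrite !(Rabs_mult _ (a * x ^ n)); apply: Rmult_le_compat_r; first exact: Rabs_pos.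
have Hpow : forall m, 0 <= INR m ^ q by move=> m; apply: pow_le; apply: pos_INR.
by rewrite Rabs_mult !(Rabs_pos_eq _ (Hpow _)); apply: Hq.
Qed.

Lemma list_Rabs_bound (l : list R) : exists A : nat, forall x, In x l -> Rabs x <= INR A.
Proof.
elim: l => [|a l [A HA]]; first by exists 0%N.
have [m Hm] := INR_archimed 1 (Rabs a) Rlt_0_1.
exists (maxn A m) => x [<-|/HA Hx].
- by apply: Rle_trans (le_INR m _ (elimT leP (leq_maxr _ _))); lra.
- exact: Rle_trans Hx (le_INR A _ (elimT leP (leq_maxl _ _))).
Qed.

Lemma shifted_prod_abs_ge l A n : (forall b, In b l -> Rabs b <= A) -> A <= INR n ->
  (INR n - A) ^ length l <= Rabs (shifted_prod l n).
Proof.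
rewrite /shifted_prod; elim: l => [|b l IH] HA Hn /=; first by rewrite Rabs_R1; lra.
rewrite Rabs_mult; apply: Rmult_le_compat.
- lra.
- by apply: pow_le; lra.
- have := HA b (or_introl erefl); have := Rle_abs (- b); have := Rle_abs (b + INR n).
  by rewrite Rabs_Ropp; lra.
- by apply: IH => // c Hc; apply: HA; right.
Qed.

Lemma shifted_prod_abs_le l A n : (forall b, In b l -> Rabs b <= A) ->
  Rabs (shifted_prod l n) <= (INR n + A) ^ length l.
Proof.
rewrite /shifted_prod; elim: l => [|b l IH] HA /=; first by rewrite Rabs_R1; lra.
rewrite Rabs_mult; apply: Rmult_le_compat; try exact: Rabs_pos.
- have := HA b (or_introl erefl); have := Rabs_triang b (INR n).
  by rewrite (Rabs_pos_eq (INR n) (pos_INR n)); lra.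
- by apply: IH => c Hc; apply: HA; right.
Qed.

(* Bernoulli's inequality (1 + 1/x)^c >= 1 + c/x, cleared of denominators. *)
Lemma bernoulli_ineq x c : 0 <= x -> x ^ c * (x + INR c) <= (x + 1) ^ c * x.
Proof.
move=> Hx; elim: c => [|c IH]; first by rewrite /=; lra.
have hp : 0 <= x ^ c by apply: pow_le.
have hc : 0 <= INR c by apply: pos_INR.
have : (x + 1) * (x ^ c * (x + INR c)) <= (x + 1) * ((x + 1) ^ c * x)
  by apply: Rmult_le_compat_l; lra.
rewrite S_INR -!tech_pow_Rmult; nra.
Qed.

(* ((x - A)/(x + A)) >= (x/(x + 1))^c once c >= 4A: the comparison behind Raabe's test. *)
Lemma raabe_ineq x A c : 0 <= A -> 4 * A <= INR c -> 2 * A <= x -> 0 < x ->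
  x ^ c * (x + A) <= (x + 1) ^ c * (x - A).
Proof.
move=> HA Hc Hx Hx0; have hB := bernoulli_ineq c (Rlt_le _ _ Hx0).
have hp : 0 <= x ^ c by apply: pow_le; lra.
apply: Rmult_le_reg_l Hx0 _.
have : x ^ c * (x + INR c) * (x - A) <= (x + 1) ^ c * x * (x - A)
  by apply: Rmult_le_compat_r; lra.
have : x * (x + A) <= (x + INR c) * (x - A) by nra.
move=> h1 h2; have : x ^ c * (x * (x + A)) <= x ^ c * ((x + INR c) * (x - A))
  by apply: Rmult_le_compat_l.
nra.
Qed.

Lemma hratio_abs_ge bs cs A n : length bs = (length cs).+1 ->
  (forall b, In b (bs ++ cs) -> Rabs b <= A) -> 1 <= A -> 2 * A <= INR n ->
  (INR n - A) ^ length bs <= (INR n + A) ^ length bs * Rabs (hratio bs cs n).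
Proof.
move=> Hlen HA HA1 H2A.
have HAb : forall b, In b bs -> Rabs b <= A by move=> b Hb; apply: HA; apply: in_or_app; left.
have HAc : forall b, In b cs -> Rabs b <= A by move=> b Hb; apply: HA; apply: in_or_app; right.
have HAn : A <= INR n by lra.
have HS : 0 < INR n.+1 by apply: lt_0_INR; lia.
set P := Rabs (shifted_prod bs n); set Q := Rabs (shifted_prod cs n).
have HQ : 0 < Q by apply: Rlt_le_trans (shifted_prod_abs_ge HAc HAn); apply: pow_lt; lra.
have HQS : Q * INR n.+1 <= (INR n + A) ^ length bs.
  have HS1 : INR n.+1 <= INR n + A by rewrite S_INR; lra.
  rewrite Hlen -tech_pow_Rmult Rmult_comm.
  by apply: Rmult_le_compat => //; [lra | exact: Rabs_pos | exact: shifted_prod_abs_le].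
have HQ0 : shifted_prod cs n <> 0 by move=> h; move: HQ; rewrite /Q h Rabs_R0; lra.
have HS0 : INR n.+1 <> 0 by lra.
have -> : Rabs (hratio bs cs n) = P / Q / INR n.+1.
  by rewrite /hratio !Rabs_div // (Rabs_pos_eq _ (Rlt_le _ _ HS)).
apply: Rle_trans (shifted_prod_abs_ge HAb HAn) _; rewrite -/P.
have {1}-> : P = Q * INR n.+1 * (P / Q / INR n.+1) by field; lra.
apply: Rmult_le_compat_r HQS; apply: Rmult_le_pos; [apply: Rmult_le_pos|]; try exact: Rabs_pos.
- by apply: Rlt_le; apply: Rinv_0_lt_compat.
- by apply: Rlt_le; apply: Rinv_0_lt_compat.
Qed.

Lemma hratio_raabe_bound bs cs : length bs = (length cs).+1 ->
  exists q K, (0 < K)%N /\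
    forall n, (K <= n)%N -> INR n ^ q <= INR n.+1 ^ q * Rabs (hratio bs cs n).
Proof.
move=> Hlen; have [A0 HA0] := list_Rabs_bound (bs ++ cs).
set A := INR A0.+1; set c := (4 * A0.+1)%N; set L := length bs.
have HA : forall b, In b (bs ++ cs) -> Rabs b <= A.
  by move=> b /HA0 Hb; apply: Rle_trans Hb (le_INR _ _ (elimT leP (leqnSn _))).
exists (c * L)%N, (2 * A0.+1)%N; split=> [|n Hn]; first lia.
have HA1 : 1 <= A by apply: (le_INR 1); lia.
have H2A : 2 * A <= INR n.
  by rewrite /A -[2]/(INR 2) -mult_INR; apply: le_INR; apply/leP.
have Hc : INR c = 4 * A.
  by rewrite /c mult_INR; have -> : INR 4 = 4 by rewrite /=; lra.
have Hraabe : INR n ^ (c * L) * (INR n + A) ^ L <= INR n.+1 ^ (c * L) * (INR n - A) ^ L.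
  rewrite (pow_mult (INR n) c) (pow_mult (INR n.+1) c) -!Rpow_mult_distr.
  apply: pow_incr; split; first by apply: Rmult_le_pos; [apply: pow_le|]; lra.
  by rewrite S_INR; apply: raabe_ineq; lra.
have HnA : 0 < (INR n + A) ^ L by apply: pow_lt; lra.
have Hpow1 : 0 <= INR n.+1 ^ (c * L) by apply: pow_le; apply: pos_INR.
apply: (Rmult_le_reg_r _ _ _ HnA); apply: Rle_trans Hraabe _.
rewrite Rmult_assoc [_ * (INR n + A) ^ L]Rmult_comm; apply: Rmult_le_compat_l => //.
exact: hratio_abs_ge.
Qed.

Section HypergeometricRadius.
Variables (bs cs : list R) (x : R).
Hypothesis Hc : nonpos_int_free cs.
Hypothesis Hnz : forall k, hcoef bs cs k <> 0.

Lemma hcoef_ratio_lim l : is_lim_seq (power_ratio (length bs) (length cs)) l ->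
  is_lim_seq (fun n => Rabs (hcoef bs cs n.+1 / hcoef bs cs n)) l.
Proof.
move=> Hl; apply: (is_lim_seq_ext (fun n => Rabs (hratio bs cs n))); last exact: hratio_abs_lim.
by move=> n; rewrite hcoef_ratio.
Qed.

Lemma hcoef_CV_radius_infinite :
  (length bs <= length cs)%N -> CV_radius (hcoef bs cs) = p_infty.
Proof.
move=> Hlen; apply: CV_radius_infinite_DAlembert => //.
by apply: hcoef_ratio_lim; apply: power_ratio_lim0.
Qed.

Lemma hcoef_CV_radius_1 : length bs = (length cs).+1 -> CV_radius (hcoef bs cs) = 1.
Proof.
move=> Hlen; rewrite (CV_radius_finite_DAlembert _ 1 Hnz Rlt_0_1) ?Rinv_1 //.
by apply: hcoef_ratio_lim; rewrite Hlen; apply: power_ratio_lim1.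
Qed.

Hypothesis Hx : x <> 0.
Hypothesis Hconv : forall p, ex_series (fun k => INR k ^ p * hweight bs cs x k).

Lemma moment_terms_not_increasing q K : (0 < K)%N ->
  ~ (forall n, (K <= n)%N -> INR n ^ q <= INR n.+1 ^ q * Rabs (hratio bs cs n * x)).
Proof.
move=> HK Hq; apply: (hweight_moment_not_lim0 Hc Hnz Hx HK Hq).
exact: ex_series_lim_0.
Qed.

Lemma hcoef_length_le : (length bs <= (length cs).+1)%N.
Proof.
rewrite leqNgt; apply/negP => Hlen.
have /is_lim_seq_spec Hinf := hratio_abs_lim Hc (power_ratio_lim_infty Hlen).
have [K HK] := Hinf (/ Rabs x); apply: (@moment_terms_not_increasing 0 K.+1) => // n Hn.
have Hx0 : 0 < Rabs x by apply: Rabs_pos_lt.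
have := HK n (elimT leP (ltnW Hn)); rewrite /= !Rmult_1_l Rabs_mult => Hr.
have := Rmult_lt_compat_r _ _ _ Hx0 Hr; rewrite Rinv_l; lra.
Qed.

Lemma hcoef_abs_lt1 : length bs = (length cs).+1 -> Rabs x < 1.
Proof.
move=> Hlen; case: (Rlt_le_dec (Rabs x) 1) => // Hx1; exfalso.
have [q [K [HK Hq]]] := hratio_raabe_bound Hlen.
apply: (@moment_terms_not_increasing q K HK) => n Hn; rewrite Rabs_mult.
have := Hq n Hn; have : 0 <= INR n.+1 ^ q * Rabs (hratio bs cs n).
  by apply: Rmult_le_pos; [apply: pow_le; apply: pos_INR | apply: Rabs_pos].
nra.
Qed.

End HypergeometricRadius.

Lemma hcoef_CV_radius_gt bs cs x : nonpos_int_free cs -> x <> 0 ->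
  (forall p, ex_series (fun k => INR k ^ p * hweight bs cs x k)) ->
  Rbar_lt (Rabs x) (CV_radius (hcoef bs cs)).
Proof.
move=> Hc Hx Hconv.
case: (classic (exists k0, hcoef bs cs k0 = 0)) => [[k0 Hk0] | Hnz].
  by apply: (@CV_radius_eventually0 _ k0) => k; apply: hcoef_eq0_le.
have {}Hnz : forall k, hcoef bs cs k <> 0 by move=> k Hk; apply: Hnz; exists k.
have := hcoef_length_le Hc Hnz Hx Hconv; rewrite leq_eqVlt ltnS => /orP [/eqP Hlen | Hlen].
- by rewrite (hcoef_CV_radius_1 Hc Hnz Hlen) /=; apply: (hcoef_abs_lt1 Hc Hnz Hx Hconv Hlen).
- by rewrite (hcoef_CV_radius_infinite Hc Hnz Hlen).
Qed.

(** * Moments as power series *)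

Definition moment_series (bs cs : list R) (p : nat) (x : R) : R :=
  Series (fun k => INR k ^ p * hweight bs cs x k).

Definition moment_coef (bs cs : list R) (p k : nat) : R := INR k ^ p * hcoef bs cs k.

Lemma moment_seriesE bs cs p x : moment_series bs cs p x = PSeries (moment_coef bs cs p) x.
Proof. by apply: Series_ext => k; rewrite hweightE /moment_coef; ring. Qed.

Lemma moment_coef_derive bs cs p k :
  PS_incr_1 (PS_derive (moment_coef bs cs p)) k = moment_coef bs cs p.+1 k.
Proof.
case: k => [|k]; rewrite /PS_incr_1 /PS_derive /moment_coef; first by rewrite /= !Rmult_0_l.
by rewrite -tech_pow_Rmult Rmult_assoc.
Qed.

Lemma CV_radius_moment_coef bs cs p : CV_radius (moment_coef bs cs p) = CV_radius (hcoef bs cs).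
Proof.
elim: p => [|p IH].
  by apply: CV_radius_ext => k; rewrite /moment_coef /= Rmult_1_l.
by rewrite -(CV_radius_ext _ _ (moment_coef_derive bs cs p)) CV_radius_incr_1 CV_radius_derive.
Qed.

Lemma ex_derive_moment_series bs cs p x : Rbar_lt (Rabs x) (CV_radius (hcoef bs cs)) ->
  ex_derive (moment_series bs cs p) x.
Proof.
move=> Hx; apply: (ex_derive_ext (PSeries (moment_coef bs cs p))).
  by move=> y; rewrite moment_seriesE.
by apply: ex_derive_PSeries; rewrite CV_radius_moment_coef.
Qed.

Lemma moment_series_euler bs cs p x : Rbar_lt (Rabs x) (CV_radius (hcoef bs cs)) ->
  x * Derive (moment_series bs cs p) x = moment_series bs cs p.+1 x.
Proof.
move=> Hx; rewrite (Derive_ext _ (PSeries (moment_coef bs cs p))); last exact: moment_seriesE.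
rewrite Derive_PSeries ?CV_radius_moment_coef // -PSeries_incr_1 moment_seriesE.
exact: PSeries_ext (moment_coef_derive bs cs p).
Qed.

Lemma moment_series_at0 bs cs p : moment_series bs cs p.+1 0 = 0.
Proof.
rewrite /moment_series (Series_ext _ (fun _ => 0 * 0)); first by rewrite Series_scal_l; ring.
by case=> [|k]; rewrite hweightE /=; ring.
Qed.

Lemma momentE bs1 bs2 cs eta1 eta2 i j :
  moment bs1 bs2 cs eta1 eta2 i j =
  if Nat.even j then moment_series bs1 cs (i + Nat.div2 j) eta1
  else moment_series bs2 cs (i + Nat.div2 j) eta2.
Proof. by []. Qed.

Section MomentDerivatives.
Variables (bs1 bs2 cs : list R) (eta1 eta2 : R).
Hypothesis Hr1 : Rbar_lt (Rabs eta1) (CV_radius (hcoef bs1 cs)).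
Hypothesis Hr2 : Rbar_lt (Rabs eta2) (CV_radius (hcoef bs2 cs)).

Lemma ex_derive_moment_eta1 i j : ex_derive (fun x => moment bs1 bs2 cs x eta2 i j) eta1.
Proof.
rewrite /moment; case: (Nat.even j); first exact: ex_derive_moment_series.
exact: ex_derive_const.
Qed.

Lemma ex_derive_moment_eta2 i j : ex_derive (fun y => moment bs1 bs2 cs eta1 y i j) eta2.
Proof.
rewrite /moment; case: (Nat.even j); last exact: ex_derive_moment_series.
exact: ex_derive_const.
Qed.

Lemma moment_euler i j :
  eta1 * Derive (fun x => moment bs1 bs2 cs x eta2 i j) eta1
  + eta2 * Derive (fun y => moment bs1 bs2 cs eta1 y i j) eta2
  = moment bs1 bs2 cs eta1 eta2 i.+1 j.
Proof.
rewrite /moment; case: (Nat.even j); rewrite Derive_const Rmult_0_r.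
- by rewrite Rplus_0_r moment_series_euler.
- by rewrite Rplus_0_l moment_series_euler.
Qed.

End MomentDerivatives.

Local Open Scope ring_scope.

(** * Derivative of a determinant *)

Lemma is_derive_big (I : Type) (r : seq I) (P : pred I) (f : I -> R -> R) (f' : I -> R) x0 :
  (forall i, is_derive (f i) x0 (f' i)) ->
  is_derive (fun x => \sum_(i <- r | P i) f i x) x0 (\sum_(i <- r | P i) f' i).
Proof.
move=> Hf; elim: r => [|a r IH].
  rewrite big_nil; apply: (@is_derive_ext R_AbsRing R_NormedModule (fun _ => 0)).
    by move=> x; rewrite big_nil.
  exact: is_derive_const.
rewrite big_cons; apply: (is_derive_ext
  (fun x => if P a then f a x + \sum_(i <- r | P i) f i x else \sum_(i <- r | P i) f i x)).
  by move=> x; rewrite big_cons.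
by case: (P a) => //; apply: is_derive_plus.
Qed.

Lemma is_derive_prod n (f : 'I_n -> R -> R) (f' : 'I_n -> R) x0 :
  (forall i, is_derive (f i) x0 (f' i)) ->
  is_derive (fun x => \prod_(i < n) f i x) x0
    (\sum_(i < n) \prod_(j < n) (if j == i then f' j else f j x0)).
Proof.
elim: n f f' => [|n IH] f f' Hf.
  rewrite big_ord0; apply: (@is_derive_ext R_AbsRing R_NormedModule (fun _ => 1)).
    by move=> x; rewrite big_ord0.
  exact: is_derive_const.
set w := widen_ord (leqnSn n).
apply: (is_derive_ext (fun x => (\prod_(i < n) f (w i) x) * f ord_max x)).
  by move=> x; rewrite big_ord_recr.
have Hmax : forall i : 'I_n, (w i == ord_max) = false by move=> i; rewrite -val_eqE /= ltn_eqF.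
have Hinit := IH _ (fun i => f' (w i)) (fun i => Hf (w i)).
have := is_derive_mult _ _ _ _ _ Hinit (Hf ord_max) Rmult_comm.
congr is_derive; rewrite /plus /mult /= RplusE !RmultE [RHS]big_ord_recr /=.
congr (_ + _).
- rewrite big_distrl /=; apply: eq_bigr => i _.
  rewrite [RHS]big_ord_recr /= eq_sym Hmax; congr (_ * _).
- rewrite [RHS]big_ord_recr /= eqxx; congr (_ * _).
  by apply: eq_bigr => j _; rewrite Hmax.
Qed.

Definition replace_row n (A : 'M[R]_n) (i : 'I_n) (B : 'M[R]_n) : 'M[R]_n :=
  \matrix_(j, k) if j == i then B j k else A j k.

Definition det_diff n (A B : 'M[R]_n) : R := \sum_(i < n) \det (replace_row A i B).

Lemma det_diffE n (A B : 'M[R]_n) :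
  det_diff A B = \sum_(s : 'S_n) (-1) ^+ s *
    \sum_(i < n) \prod_(j < n) (if j == i then B j (s j) else A j (s j)).
Proof.
under [RHS]eq_bigr => s _ do rewrite big_distrr.
rewrite [RHS]exchange_big; apply: eq_bigr => i _ /=; apply: eq_bigr => s _.
by congr (_ * _); apply: eq_bigr => j _; rewrite mxE.
Qed.

Lemma is_derive_det n (F : R -> 'M[R]_n) (F' : 'M[R]_n) x0 :
  (forall i j, is_derive (fun x => F x i j) x0 (F' i j)) ->
  is_derive (fun x => \det (F x)) x0 (det_diff (F x0) F').
Proof.
move=> HF; rewrite det_diffE.
apply: (@is_derive_ext R_AbsRing R_NormedModule
  (fun x => \sum_(s : 'S_n) (-1) ^+ s * \prod_(i < n) F x i (s i))) => //.
apply: is_derive_big => s; apply: is_derive_scal.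
by apply: is_derive_prod => j; apply: HF.
Qed.

Lemma det_diff_linear n (A B C : 'M[R]_n) b c :
  det_diff A (b *: B + c *: C) = b * det_diff A B + c * det_diff A C.
Proof.
rewrite /det_diff !big_distrr -big_split /=; apply: eq_bigr => i _.
have Hrow' : forall D : 'M[R]_n, row' i (replace_row A i D) = row' i A.
  by move=> D; apply/matrixP => j k; rewrite /replace_row !mxE eq_sym (negbTE (neq_lift i j)).
apply: (@determinant_multilinear _ _ _ _ _ i); rewrite ?Hrow' //.
by apply/rowP => k; rewrite /replace_row !mxE eqxx.
Qed.

Definition lead_mx (A : nat -> nat -> R) n : 'M[R]_n := \matrix_(i < n, j < n) A i j.

Lemma det_diff_shift (Mo : nat -> nat -> R) m :
  det_diff (lead_mx Mo m.+1) (lead_mx (fun i => Mo i.+1) m.+1)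
  = \det (\matrix_(i < m.+1, j < m.+1) Mo (if i == ord_max then m.+1 else i) j).
Proof.
rewrite /det_diff /lead_mx big_ord_recr /= big1 ?add0r => [|i _].
  by congr (\det _); apply/matrixP => i j; rewrite /replace_row !mxE; case: eqP => [->|].
have lt_i : (i.+1 < m.+1)%N by rewrite ltnS.
apply: (determinant_alternate (i1 := widen_ord (leqnSn m) i) (i2 := Ordinal lt_i)).
  by rewrite -val_eqE /= neq_ltn ltnSn.
move=> k; rewrite !mxE eqxx.
by have -> : (Ordinal lt_i == widen_ord (leqnSn m) i) = false by rewrite -val_eqE /= gtn_eqF.
Qed.

(** * Gauss-Borel factorization *)

Lemma sum_f_R0_big (f : nat -> R) n : sum_f_R0 f n = \sum_(k < n.+1) f k.
Proof. by elim: n => [|n IH]; rewrite ?big_ord1 // big_ord_recr /= -IH. Qed.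

Lemma big_ord_widen0 (F : nat -> R) i n : (i < n)%N ->
  (forall k, (i < k)%N -> F k = 0) -> \sum_(k < i.+1) F k = \sum_(k < n) F k.
Proof.
move=> lt_in HF; rewrite (big_ord_widen n F lt_in) big_mkcond /=.
by apply: eq_bigr => k _; case: ltnP => // /HF ->.
Qed.

Lemma det_lead_mx_unitri S n : lower_unitri S -> \det (lead_mx S n) = 1.
Proof.
case=> Hdiag Hup; rewrite det_trig; last by apply/is_trig_mxP => i j lt_ij; rewrite mxE Hup.
by apply: big1 => i _; rewrite mxE Hdiag.
Qed.

Section GaussBorel.
Variables (Mo S St : nat -> nat -> R) (H : nat -> R).
Hypothesis HGB : gauss_borel Mo S St H.

Lemma gauss_borel_big i j :
  \sum_(k < i.+1) \sum_(l < j.+1) S i k * Mo k l * St j l = if Nat.eqb i j then H i else 0.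
Proof.
case: HGB => [_ [_ <-]]; rewrite sum_f_R0_big.
by apply: eq_bigr => k _; rewrite sum_f_R0_big.
Qed.

Lemma lead_mx_gauss_borel n :
  lead_mx S n *m lead_mx Mo n *m (lead_mx St n)^T = diag_mx (\row_(i < n) H i).
Proof.
case: HGB => [[_ HS] [[_ HSt] _]]; apply/matrixP => i j; rewrite !mxE.
transitivity (\sum_(k < i.+1) \sum_(l < j.+1) S i k * Mo k l * St j l).
  rewrite (@big_ord_widen0 (fun k => \sum_(l < j.+1) S i k * Mo k l * St j l) i n) //;
    last by move=> k lt_ik; apply: big1 => l _; rewrite HS // !mul0r.
  under eq_bigr => l _ do rewrite !mxE big_distrl /=.
  rewrite exchange_big /=; apply: eq_bigr => k _.
  rewrite (@big_ord_widen0 (fun l => S i k * Mo k l * St j l) j n) //;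
    last by move=> l lt_jl; rewrite HSt // mulr0.
  by apply: eq_bigr => l _; rewrite !mxE.
rewrite gauss_borel_big; case: (eqVneq i j) => [->|ne_ij].
  by rewrite PeanoNat.Nat.eqb_refl mulr1n.
rewrite mulr0n; case: PeanoNat.Nat.eqb_spec => // /val_inj eq_ij.
by rewrite eq_ij eqxx in ne_ij.
Qed.

Lemma det_lead_mx_gauss_borel n : \det (lead_mx Mo n) = \prod_(i < n) H i.
Proof.
have := congr1 determinant (lead_mx_gauss_borel n).
case: HGB => [HS [HSt _]].
rewrite !det_mulmx det_tr (det_lead_mx_unitri n HS) (det_lead_mx_unitri n HSt) mul1r mulr1 => ->.
by rewrite det_diag; apply: eq_bigr => i _; rewrite mxE.
Qed.

Lemma det_lead_mx_succ n : \det (lead_mx Mo n.+1) = \det (lead_mx Mo n) * H n.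
Proof. by rewrite !det_lead_mx_gauss_borel big_ord_recr. Qed.

Lemma gauss_borel_row_orth n j : (j < n)%N -> \sum_(k < n.+1) S n k * Mo k j = 0.
Proof.
case: HGB => [_ [[HStd HSt] _]].
elim/ltn_ind: j => j IH lt_jn; have := gauss_borel_big n j.
have -> : Nat.eqb n j = false by apply/PeanoNat.Nat.eqb_neq => eq_nj; rewrite eq_nj ltnn in lt_jn.
rewrite exchange_big /= big_ord_recr /= -big_distrl /= HStd mulr1 big1 ?add0r // => l _.
by rewrite -big_distrl /= IH ?mul0r // (ltn_trans (ltn_ord l)).
Qed.

(* Row orthogonality writes the moment row m+1 as -sum_(k<=m) S_(m+1,k) (row k):
   a triangular row operation E whose last diagonal entry is -S_(m+1,m). *)
Lemma det_last_row_shift m :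
  \det (\matrix_(i < m.+1, j < m.+1) Mo (if i == ord_max then m.+1 else i) j)
  = - S m.+1 m * \det (lead_mx Mo m.+1).
Proof.
case: HGB => [[HSd HS] _].
set E := \matrix_(i < m.+1, k < m.+1) (if i == ord_max then - S m.+1 k else (i == k)%:R).
have -> : \matrix_(i < m.+1, j < m.+1) Mo (if i == ord_max then m.+1 else i) j
          = E *m lead_mx Mo m.+1.
  apply/matrixP => i j; rewrite !mxE; under eq_bigr => k _ do rewrite !mxE.
  case: ifP => [_|_].
  - have := gauss_borel_row_orth (ltn_ord j); rewrite big_ord_recr /= HSd mul1r.
    move=> Horth; under [RHS]eq_bigr => k _ do rewrite mulNr.
    by rewrite sumrN; apply/eqP; rewrite -addr_eq0 addrC Horth.
  - rewrite (bigD1 i) //= eqxx mul1r big1 ?addr0 // => k ne_ki.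
    by rewrite eq_sym (negbTE ne_ki) mul0r.
rewrite det_mulmx det_trig; last first.
  apply/is_trig_mxP => i k lt_ik; rewrite mxE.
  case: ifP => [/eqP eq_i | _]; last by rewrite -val_eqE ltn_eqF.
  by move: lt_ik; rewrite eq_i /= ltnNge -ltnS ltn_ord.
rewrite big_ord_recr /= big1 ?mul1r; first by rewrite mxE eqxx.
by move=> i _; rewrite mxE ifF ?eqxx // -val_eqE /= ltn_eqF.
Qed.

Lemma p1_gauss_borel n :
  p1 S n * \det (lead_mx Mo n) = - det_diff (lead_mx Mo n) (lead_mx (fun i => Mo i.+1) n).
Proof.
case: n => [|m]; first by rewrite /det_diff big_ord0 oppr0 mul0r.
by rewrite det_diff_shift det_last_row_shift mulNr opprK.
Qed.

End GaussBorel.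

(** * Derivatives of the tau functions *)

Lemma det_lead_mx_col0 (A : nat -> nat -> R) n (j : 'I_n) :
  (forall i, A i j = 0) -> \det (lead_mx A n) = 0.
Proof. by move=> Hj; rewrite (expand_det_col _ j) big1 // => i _; rewrite mxE Hj mul0r. Qed.

Lemma tauE bs1 bs2 cs eta1 eta2 n :
  tau bs1 bs2 cs eta1 eta2 n = \det (lead_mx (moment bs1 bs2 cs eta1 eta2) n).
Proof. by []. Qed.

(* The radius of convergence is 0 when |bs| > |cs| + 1, so eta <> 0 is needed;
   it holds because a column of k^(i+1) w(k) vanishes identically at eta = 0. *)
Section Tau.
Variables (bs1 bs2 cs : list R) (eta1 eta2 : R).
Hypothesis Htau : forall n, tau bs1 bs2 cs eta1 eta2 n <> 0.

Lemma tau_neq0_eta1 : eta1 <> 0.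
Proof.
move=> eta1_0; case: (Htau (n := 3%N)); rewrite tauE.
apply: (@det_lead_mx_col0 _ _ (inord 2%N)) => i.
by rewrite momentE inordK //= eta1_0 addn1 moment_series_at0.
Qed.

Lemma tau_neq0_eta2 : eta2 <> 0.
Proof.
move=> eta2_0; case: (Htau (n := 4%N)); rewrite tauE.
apply: (@det_lead_mx_col0 _ _ (inord 3%N)) => i.
by rewrite momentE inordK //= eta2_0 addn1 moment_series_at0.
Qed.

End Tau.

Section TauDerivatives.
Variables (bs1 bs2 cs : list R) (eta1 eta2 : R).
Hypothesis Hr1 : Rbar_lt (Rabs eta1) (CV_radius (hcoef bs1 cs)).
Hypothesis Hr2 : Rbar_lt (Rabs eta2) (CV_radius (hcoef bs2 cs)).

Definition dmoment_eta1 n : 'M[R]_n :=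
  \matrix_(i < n, j < n) Derive (fun x => moment bs1 bs2 cs x eta2 i j) eta1.

Definition dmoment_eta2 n : 'M[R]_n :=
  \matrix_(i < n, j < n) Derive (fun y => moment bs1 bs2 cs eta1 y i j) eta2.

Lemma is_derive_tau_eta1 n : is_derive (fun x => tau bs1 bs2 cs x eta2 n) eta1
  (det_diff (lead_mx (moment bs1 bs2 cs eta1 eta2) n) (dmoment_eta1 n)).
Proof.
apply: (@is_derive_det n (fun x => lead_mx (moment bs1 bs2 cs x eta2) n)) => i j.
apply: (is_derive_ext (fun x => moment bs1 bs2 cs x eta2 i j)).
  by move=> x; rewrite mxE.
by rewrite mxE; apply: Derive_correct; apply: ex_derive_moment_eta1.
Qed.

Lemma is_derive_tau_eta2 n : is_derive (fun y => tau bs1 bs2 cs eta1 y n) eta2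
  (det_diff (lead_mx (moment bs1 bs2 cs eta1 eta2) n) (dmoment_eta2 n)).
Proof.
apply: (@is_derive_det n (fun y => lead_mx (moment bs1 bs2 cs eta1 y) n)) => i j.
apply: (is_derive_ext (fun y => moment bs1 bs2 cs eta1 y i j)).
  by move=> y; rewrite mxE.
by rewrite mxE; apply: Derive_correct; apply: ex_derive_moment_eta2.
Qed.

Lemma tau_euler n :
  let M := lead_mx (moment bs1 bs2 cs eta1 eta2) n in
  eta1 * det_diff M (dmoment_eta1 n) + eta2 * det_diff M (dmoment_eta2 n)
  = det_diff M (lead_mx (fun i => moment bs1 bs2 cs eta1 eta2 i.+1) n).
Proof.
move=> M; rewrite -det_diff_linear; congr det_diff; apply/matrixP => i j; rewrite !mxE.
exact: moment_euler.
Qed.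

End TauDerivatives.

Local Close Scope ring_scope.

Theorem mainTheorem10
  (bs1 bs2 cs : list R) (eta1 eta2 : R)
  (Hc : forall c, In c cs -> forall m : nat, c <> - INR m)
  (Hconv1 : forall p : nat, ex_series (fun k => INR k ^ p * hweight bs1 cs eta1 k))
  (Hconv2 : forall p : nat, ex_series (fun k => INR k ^ p * hweight bs2 cs eta2 k))
  (Htau : forall n : nat, tau bs1 bs2 cs eta1 eta2 n <> 0)
  (Sm St : nat -> nat -> R) (H : nat -> R)
  (HGB : gauss_borel (moment bs1 bs2 cs eta1 eta2) Sm St H) :
  forall n : nat,
    H n = tau bs1 bs2 cs eta1 eta2 (S n) / tau bs1 bs2 cs eta1 eta2 n /\
    exists d1 d2 : R,
      is_derive (fun x => tau bs1 bs2 cs x eta2 n) eta1 d1 /\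
      is_derive (fun y => tau bs1 bs2 cs eta1 y n) eta2 d2 /\
      p1 Sm n = - ((eta1 * d1 + eta2 * d2) / tau bs1 bs2 cs eta1 eta2 n).
Proof.
move=> n; set M := lead_mx (moment bs1 bs2 cs eta1 eta2) n.
have Htau_n : (\det M)%R <> 0 := Htau n.
split; first by rewrite !tauE (det_lead_mx_succ HGB) -RmultE -/M; field.
have Hr1 := hcoef_CV_radius_gt Hc (tau_neq0_eta1 Htau) Hconv1.
have Hr2 := hcoef_CV_radius_gt Hc (tau_neq0_eta2 Htau) Hconv2.
exists (det_diff M (dmoment_eta1 bs1 bs2 cs eta1 eta2 n)),
       (det_diff M (dmoment_eta2 bs1 bs2 cs eta1 eta2 n)).
split; first exact: is_derive_tau_eta1.
split; first exact: is_derive_tau_eta2.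
have Heuler : eta1 * det_diff M (dmoment_eta1 bs1 bs2 cs eta1 eta2 n)
               + eta2 * det_diff M (dmoment_eta2 bs1 bs2 cs eta1 eta2 n)
             = - (p1 Sm n * (\det M)%R).
  by rewrite RplusE !RmultE (tau_euler Hr1 Hr2) RoppE (p1_gauss_borel HGB) GRing.opprK.
by rewrite tauE -/M Heuler; field.
Qed.
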